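(* Let $R$ be a commutative ring with $1$ and let $\alpha_0=1,\alpha_1,\alpha_2,\dots$ be a sequence in $R$. Define the infinite matrix $M=M(\alpha)$ with entries $M_{i,j}$, $i,j\in\mathbb N$, by $M_{0,0}=1$, $M_{0,j}=1$, $M_{i,0}=\alpha_i$, and $M_{i,j}=M_{i-1,j}+M_{i,j-1}$ for $i,j\geq1$. Define the unipotent lower-triangular infinite matrix $L=L(\alpha)$ by $L_{i,j}=M_{i-j,j}$ for $i\geq j\geq0$ and $L_{i,j}=0$ for $j>i$. Let $U$ be the infinite upper-triangular matrix with entries $U_{i,j}=\binom{j}{i}$. Then $M(\alpha)=L(\alpha)U$. *)

From mathcomp Require Import all_boot all_order all_algebra.
Set Implicit Arguments. Unset Strict Implicit. Unset Printing Implicit Defensive.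
Import GRing.Theory.
Local Open Scope ring_scope.

Fixpoint Mmat (R : comRingType) (alpha : nat -> R) (i : nat) : nat -> R :=
  match i with
  | 0 => fun _ => 1
  | i'.+1 =>
      fix Mrow (j : nat) : R :=
        match j with
        | 0 => alpha i'.+1
        | j'.+1 => Mmat alpha i' j'.+1 + Mrow j'
        end
  end.

Definition Lmat (R : comRingType) (alpha : nat -> R) (i j : nat) : R :=
  if (j <= i)%N then Mmat alpha (i - j) j else 0.

Definition Umat (R : comRingType) (i j : nat) : R := ('C(j, i))%:R.

(* Product of infinite matrices A * B where A is lower triangular
   (A i k = 0 for k > i), so the sum over k is finite: k ranges over 0..i. *)
Definition lt_mul (R : comRingType) (A B : nat -> nat -> R) (i j : nat) : R :=
  \sum_(k < i.+1) A i k * B k j.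

(* The (i, j) entry of L U is G i j = sum_(k <= i) M(i-k, k) binom(j, k).
   Pascal's rule binom(j+1, k) = binom(j, k) + binom(j, k-1) turns
   G i (j+1) - G i j into a sum of entries of M along the antidiagonal shifted
   by one; splitting those entries with the recurrence of M shows that G obeys
   the same recurrence and boundary values as M, hence G = M. *)

From mathcomp Require Import all_boot all_order all_algebra.
Local Open Scope ring_scope.
Import GRing.Theory.

Lemma sum_mul_binS (R : pzSemiRingType) (c : nat -> R) (n j : nat) :
  \sum_(k < n.+1) c k * 'C(j.+1, k)%:R =
  \sum_(k < n.+1) c k * 'C(j, k)%:R + \sum_(k < n) c k.+1 * 'C(j, k)%:R.
Proof.
rewrite !big_ord_recl !bin0 -addrA; congr (_ + _).
under eq_bigr => k _ do rewrite lift0 binS natrD mulrDr.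
by rewrite big_split.
Qed.

Section MmatUniqueness.
Variables (R : comRingType) (alpha : nat -> R).

Lemma MmatSS (n j : nat) :
  Mmat alpha n.+1 j.+1 = Mmat alpha n j.+1 + Mmat alpha n.+1 j.
Proof. by []. Qed.

Lemma Mmat_unique (f : nat -> nat -> R) :
  (forall j, f 0%N j = 1) -> (forall n, f n.+1 0%N = alpha n.+1) ->
  (forall n j, f n.+1 j.+1 = f n j.+1 + f n.+1 j) ->
  forall i j, Mmat alpha i j = f i j.
Proof.
move=> f_row0 f_col0 fSS; elim=> [|n IHn] j; first by rewrite f_row0.
elim: j => [|j IHj]; first by rewrite f_col0.
by rewrite MmatSS fSS IHn IHj.
Qed.

Definition Mbin (i j : nat) : R :=
  \sum_(k < i.+1) Mmat alpha (i - k) k * 'C(j, k)%:R.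

Lemma Mbin_row0 (j : nat) : Mbin 0 j = 1.
Proof. by rewrite /Mbin big_ord1 bin0 mulr1. Qed.

Lemma Mbin_col0 (n : nat) : Mbin n.+1 0 = alpha n.+1.
Proof.
rewrite /Mbin big_ord_recl subn0 bin0 mulr1 big1 ?addr0 // => k _.
by rewrite bin0n mulr0.
Qed.

Lemma sum_Mmat_shift (n j : nat) :
  \sum_(k < n.+1) Mmat alpha (n - k) k.+1 * 'C(j, k)%:R = Mbin n j.+1.
Proof.
rewrite /Mbin (@sum_mul_binS _ (fun k => Mmat alpha (n - k) k)).
rewrite big_ord_recr [in X in _ = X + _]big_ord_recr /= subnn addrAC.
congr (_ + _); rewrite -big_split /=; apply: eq_bigr => k _.
by rewrite -[in LHS](subnSK (ltn_ord k)) MmatSS subnSK // mulrDl addrC.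
Qed.

Lemma MbinSS (n j : nat) : Mbin n.+1 j.+1 = Mbin n j.+1 + Mbin n.+1 j.
Proof.
rewrite -[Mbin n j.+1]sum_Mmat_shift {1}/Mbin.
by rewrite (@sum_mul_binS _ (fun k => Mmat alpha (n.+1 - k) k)) addrC.
Qed.

Lemma Mmat_Mbin (i j : nat) : Mmat alpha i j = Mbin i j.
Proof. exact: Mmat_unique Mbin_row0 Mbin_col0 MbinSS i j. Qed.

End MmatUniqueness.

Theorem proposition4p6 (R : comRingType) (alpha : nat -> R) (h0 : alpha 0%N = 1) :
  forall i j : nat, Mmat alpha i j = lt_mul (Lmat alpha) (@Umat R) i j.
Proof.
move=> i j; rewrite Mmat_Mbin /lt_mul; apply: eq_bigr => k _.
by rewrite /Lmat /Umat -ltnS ltn_ord.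
Qed.
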